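(* As formal power series in $q$, \[\sum_{\pi\in\mathcal{U}}q^{\mathcal{O}(\pi)}=\frac{1}{(q;q)_\infty^2}\quad\text{and}\quad \sum_{\pi\in\mathcal{D}}q^{\mathcal{O}(\pi')}=(-q;q)_\infty^2,\] where $\mathcal{U}$ is the set of all partitions, $\mathcal{D}$ the set of partitions into distinct parts, $\pi'$ denotes the conjugate of $\pi$, and for $\pi=(\lambda_1,\lambda_2,\dots)$, $\mathcal{O}(\pi)=\lambda_1+\lambda_3+\lambda_5+\cdots$.
   Context: A partition is a finite weakly decreasing sequence of positive integers; the conjugate $\pi'$ of $\pi$ is the partition whose $j$-th part is the number of parts of $\pi$ that are $\ge j$. $(a;q)_\infty=\prod_{n\ge0}(1-aq^n)$. *)

From mathcomp Require Import all_boot all_order all_algebra.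
Set Implicit Arguments. Unset Strict Implicit. Unset Printing Implicit Defensive.
Import Order.TTheory GRing.Theory Num.Theory.
Local Open Scope ring_scope.

Definition is_partition (pi : seq nat) : bool :=
  sorted geq pi && all (fun x => 0 < x)%N pi.

Definition distinct_parts (pi : seq nat) : bool := is_partition pi && uniq pi.

Definition conj_part (pi : seq nat) : seq nat :=
  mkseq (fun j => count (fun x => (j.+1 <= x)%N) pi) (head 0%N pi).

(* O(pi) = lambda_1 + lambda_3 + lambda_5 + ... (0-based even indices). *)
Definition Oodd (pi : seq nat) : nat :=
  (\sum_(i < size pi | ~~ odd i) nth 0%N pi i)%N.

Definition fps := nat -> int.
Definition fps1 : fps := fun n => (n == 0%N)%:Z.
Definition fmul (f g : fps) : fps :=
  fun n => \sum_(i < n.+1) f i * g (n - i)%N.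

Definition binom_factor (s : int) (m : nat) : fps :=
  fun n => (n == 0%N)%:Z + s * (n == m)%:Z.

Definition fprod (f : nat -> fps) (M : nat) : fps :=
  foldr fmul fps1 (map f (iota 0 M)).

(* P is the infinite product prod_{k>=0} f k (coefficientwise stabilization,
   i.e. convergence in the q-adic topology). *)
Definition is_infprod (f : nat -> fps) (P : fps) : Prop :=
  forall n, exists N, forall M, (N <= M)%N -> fprod f M n = P n.

(* (q;q)_oo = prod_{k>=0} (1 - q^{k+1}) *)
Definition qq_factor (k : nat) : fps := binom_factor (-1) k.+1.
(* (-q;q)_oo = prod_{k>=0} (1 + q^{k+1}) *)
Definition mqq_factor (k : nat) : fps := binom_factor 1 k.+1.

From Pilot Require Import Defs.
From mathcomp Require Import all_boot all_order all_algebra.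
From mathcomp Require Import zify.
From Stdlib Require Import FunctionalExtensionality.
Import Defs. (* re-import: finfun also defines [fprod] *)
Import GRing.Theory.
Set Implicit Arguments. Unset Strict Implicit. Unset Printing Implicit Defensive.

(* Pad a partition with zeros to length L.  A weakly decreasing sequence of
   length L+1 is uniquely t + (d, ..., d) with t of length L ending in 0, and
   adding these d columns of height L+1 raises O by d * ceil((L+1)/2).  Hence
   partitions with at most L parts are counted by O with the generating
   function prod_{k=1..L} 1/(1 - q^ceil(k/2)), which for L = 2M is
   1/(q;q)_M^2.  Dually, O(pi') = sum_{x in pi} ceil(x/2), so partitions into
   distinct parts at most 2M are counted by prod_{x=1..2M} (1 + q^ceil(x/2))
   = (-q;q)_M^2.  The coefficient of q^n only involves L, 2M >= 2n, where the
   finite products agree with the infinite ones. *)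

Section PowerSeries.
Local Open Scope ring_scope.

Definition fps_trunc (N : nat) (f : fps) : {poly int} := \poly_(i < N) f i.

Lemma coef_fps_trunc N f n : (n < N)%N -> (fps_trunc N f)`_n = f n.
Proof. by move=> ltnN; rewrite coef_poly ltnN. Qed.

Lemma fmul_trunc N f g n : (n < N)%N -> fmul f g n = (fps_trunc N f * fps_trunc N g)`_n.
Proof.
move=> ltnN; rewrite coefM; apply: eq_bigr => -[i /= lei] _.
by rewrite !coef_fps_trunc // (leq_ltn_trans _ ltnN) ?leq_subr // -ltnS.
Qed.

Lemma fmul_eq_upto n f f' g g' :
  (forall k, (k <= n)%N -> f k = f' k) -> (forall k, (k <= n)%N -> g k = g' k) ->
  fmul f g n = fmul f' g' n.
Proof. by move=> eqf eqg; apply: eq_bigr => -[i lei] _; rewrite eqf ?eqg ?leq_subr. Qed.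

Lemma fmulC f g : fmul f g = fmul g f.
Proof. by apply: functional_extensionality => n; rewrite !(@fmul_trunc n.+1) // mulrC. Qed.

Lemma fmulA f g h : fmul f (fmul g h) = fmul (fmul f g) h.
Proof.
apply: functional_extensionality => n.
rewrite (@fmul_trunc n.+1) // [RHS](@fmul_trunc n.+1) //.
have trunc_fmul u v k : (k < n.+1)%N ->
    (fps_trunc n.+1 (fmul u v))`_k = (fps_trunc n.+1 u * fps_trunc n.+1 v)`_k.
  by move=> ltk; rewrite coef_fps_trunc // (@fmul_trunc n.+1).
rewrite !coefM; under eq_bigr => i _ do rewrite trunc_fmul ?ltnS ?leq_subr //.
under [RHS]eq_bigr => i _ do rewrite trunc_fmul //.
by rewrite -!coefM mulrA.
Qed.

Lemma fps_trunc1 N : (0 < N)%N -> fps_trunc N fps1 = 1.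
Proof.
move=> N_gt0; apply/polyP => i; rewrite coef_poly coef1 /fps1.
by case: i => [|i]; [rewrite N_gt0 | case: ifP].
Qed.

Lemma fmulr1 f : fmul f fps1 = f.
Proof.
apply: functional_extensionality => n.
by rewrite (@fmul_trunc n.+1) // fps_trunc1 // mulr1 coef_fps_trunc.
Qed.

Lemma fmul1r f : fmul fps1 f = f.
Proof. by rewrite fmulC fmulr1. Qed.

Lemma fps_trunc_binom_factor N s m : (0 < N)%N ->
  fps_trunc N (binom_factor s m) = 1 + (if (m < N)%N then s else 0)%:P * 'X^m.
Proof.
move=> N_gt0; apply/polyP => i.
rewrite coef_poly coefD coef1 coefCM coefXn /binom_factor.
rewrite -!natz; case: ltnP => [ltiN | leNi]; case: (eqVneq i m) => [eqim | neim].
- by rewrite eqim -eqim ltiN.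
- by rewrite mulr0n !mulr0.
- by rewrite eqim ltnNge -eqim leNi mul0r gtn_eqF // (leq_trans N_gt0).
- by rewrite mulr0n mulr0 gtn_eqF // (leq_trans N_gt0).
Qed.

Lemma fmul_binom_factor f s m n :
  fmul f (binom_factor s m) n = f n + (if (m <= n)%N then s * f (n - m)%N else 0).
Proof.
rewrite (@fmul_trunc n.+1) // fps_trunc_binom_factor // mulrDr mulr1 coefD.
rewrite coef_fps_trunc // mulrCA coefCM coefMXn ltnS.
by case: leqP => lemn; rewrite ?mulr0 // coef_fps_trunc // ltnS leq_subr.
Qed.

Lemma fprodS f M : fprod f M.+1 = fmul (fprod f M) (f M).
Proof.
rewrite /fprod -addn1 iotaD map_cat foldr_cat /= fmulr1 add0n.
elim: (map f (iota 0 M)) => [|g l IHl] /=; first by rewrite fmul1r.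
by rewrite IHl fmulA.
Qed.

Lemma fprodM f g M : fprod (fun k => fmul (f k) (g k)) M = fmul (fprod f M) (fprod g M).
Proof.
elim: M => [|M IHM]; first by rewrite fmulr1.
rewrite !fprodS IHM -!fmulA; congr (fmul _ _).
by rewrite !fmulA (fmulC (fprod g M)).
Qed.

Lemma fprod_fps1 M : fprod (fun=> fps1) M = fps1.
Proof. by elim: M => [|M IHM] //; rewrite fprodS IHM fmulr1. Qed.

Lemma fprod_double f M : fprod (fun k => f k./2) M.*2 = fmul (fprod f M) (fprod f M).
Proof.
elim: M => [|M IHM]; first by rewrite fmulr1.
rewrite doubleS !fprodS IHM /= uphalf_double half_double.
rewrite -!fmulA; congr (fmul _ _).
by rewrite fmulA [fmul (f M) _]fmulC -fmulA.
Qed.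

Lemma fprod_stable f N M k : (N <= M)%N ->
  (forall j i, (N <= j)%N -> (i <= k)%N -> f j i = fps1 i) -> fprod f M k = fprod f N k.
Proof.
move=> leNM f_lt; elim: M leNM => [|M IHM]; first by rewrite leqn0 => /eqP ->.
rewrite leq_eqVlt => /predU1P [-> // | ltNM].
rewrite fprodS -IHM // -{2}(fmulr1 (fprod f M)).
by apply: fmul_eq_upto => // i lei; apply: f_lt.
Qed.

Lemma binom_factor_lt s m i : (i < m)%N -> binom_factor s m i = fps1 i.
Proof. by move=> ltim; rewrite /binom_factor (ltn_eqF ltim) mulr0 addr0. Qed.

Definition geom_series (w : nat) : fps := fun n => (w %| n)%:Z.

Lemma geom_series_lt w i : (i < w)%N -> geom_series w i = fps1 i.
Proof. by case: i => [|i] ltiw; rewrite /geom_series ?dvdn0 // gtnNdvd. Qed.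

Lemma fmul_geom_series_binom w :
  (0 < w)%N -> fmul (geom_series w) (binom_factor (-1) w) = fps1.
Proof.
move=> w_gt0; apply: functional_extensionality => n.
rewrite fmul_binom_factor; case: leqP => [lewn | ltnw]; last by rewrite addr0 geom_series_lt.
rewrite /geom_series /fps1 (dvdn_subl lewn (dvdnn w)) mulN1r subrr gtn_eqF //.
exact: leq_trans lewn.
Qed.

Section InfiniteProduct.
Variable f : nat -> fps.
Hypothesis f_lt : forall j i, (i <= j)%N -> f j i = fps1 i.

Lemma fprod_stable_diag M k : (k <= M)%N -> fprod f M k = fprod f k k.
Proof. by move=> lekM; apply: fprod_stable => // j i lekj leik; rewrite f_lt ?(leq_trans leik). Qed.

Lemma is_infprod_fprod : is_infprod f (fun k => fprod f k k).
Proof. by move=> n; exists n => M; apply: fprod_stable_diag. Qed.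

Lemma is_infprod_fmul_coef P n k : is_infprod f P -> (k <= n)%N ->
  fmul P P k = fmul (fprod f n) (fprod f n) k.
Proof.
move=> infP lekn; have P_coef j : (j <= k)%N -> P j = fprod f n j.
  move=> lejk; have [N fprodN] := infP j; have lejn := leq_trans lejk lekn.
  by rewrite -(fprodN (maxn N n)) ?leq_maxl // !fprod_stable_diag // (leq_trans lejn) ?leq_maxr.
by apply: fmul_eq_upto => j lejk; rewrite P_coef.
Qed.

End InfiniteProduct.
End PowerSeries.

Fixpoint sum_every_other (b : bool) (s : seq nat) : nat :=
  if s is x :: r then (if b then x else 0) + sum_every_other (~~ b) r else 0.

Lemma sum_every_other_big b s :
  \sum_(i < size s | odd i != b) nth 0 s i = sum_every_other b s.
Proof.
elim: s b => [|x s IHs] b; first by rewrite big_ord0.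
rewrite big_mkcond big_ord_recl [RHS]/= -IHs [in RHS]big_mkcond; congr (_ + _); first by case: b.
by apply: eq_bigr => i _; rewrite /=; case: b; case: odd.
Qed.

Lemma Oodd_sum_every_other s : Oodd s = sum_every_other true s.
Proof. by rewrite -sum_every_other_big; apply: eq_bigl => i; case: odd. Qed.

Lemma sum_every_other_cat_nseq0 b s m :
  sum_every_other b (s ++ nseq m 0) = sum_every_other b s.
Proof.
elim: s b => [|x s IHs] b /=; last by rewrite IHs.
by elim: m b => [|m IHm] b //=; rewrite IHm; case: b.
Qed.

Lemma sum_every_other_map_addn b d s :
  sum_every_other b (map (addn d) s) =
  sum_every_other b s + d * (if b then uphalf (size s) else (size s)./2).
Proof.
elim: s b => [|x s IHs] b /=; first by case: b; rewrite muln0.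
by rewrite IHs; case: b => /=; rewrite ?uphalf_half; lia.
Qed.

Lemma size_le_sum_every_other b s :
  all (fun x => 0 < x) s -> size s <= (sum_every_other b s).*2 + ~~ b.
Proof.
elim: s b => [|x s IHs] b //= /andP [x_gt0 /(IHs (~~ b))].
by case: b => /=; lia.
Qed.

Lemma geq_trans : transitive geq.
Proof. exact: rev_trans leq_trans. Qed.

Lemma uniq_flatten_map (I T : eqType) (F : I -> seq T) (s : seq I) :
  uniq s -> (forall i, uniq (F i)) ->
  (forall i j x, x \in F i -> x \in F j -> i = j) -> uniq (flatten (map F s)).
Proof.
move=> uniq_s uniq_F disjF; elim: s uniq_s => [|i s IHs] //= /andP [i_notin_s /IHs uniq_flat].
rewrite cat_uniq uniq_F uniq_flat andbT; apply/hasPn => x /flattenP [_ /mapP [j j_in_s ->]].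
by move=> x_in_Fj; apply/negP => /disjF /(_ x_in_Fj) eq_ij; rewrite eq_ij j_in_s in i_notin_s.
Qed.

Definition add_columns (d : nat) (t : seq nat) : seq nat := map (addn d) (rcons t 0).

Lemma add_columns_inj d d' t t' : add_columns d t = add_columns d' t' -> d = d' /\ t = t'.
Proof.
move=> eq_add; have eq_size : size t = size t'.
  by move/(congr1 size): eq_add; rewrite !size_map !size_rcons => -[].
have eq_d : d = d'.
  by move/(congr1 (last 0)): eq_add; rewrite /add_columns !map_rcons !last_rcons !addn0.
split=> //; move: eq_add; rewrite /add_columns eq_d => /(inj_map (@addnI d')).
by move/(congr1 (take (size t))); rewrite -!cats1 !take_size_cat.
Qed.

Lemma sum_every_other_add_columns d t :
  sum_every_other true (add_columns d t) = sum_every_other true t + d * uphalf (size t).+1.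
Proof.
by rewrite sum_every_other_map_addn size_rcons -cats1 (sum_every_other_cat_nseq0 _ _ 1).
Qed.

Lemma sorted_add_columns d t : sorted geq t -> sorted geq (add_columns d t).
Proof.
move=> sorted_t; rewrite sorted_map.
apply: (@sub_sorted _ geq); first by move=> x y /=; rewrite leq_add2l.
by case: t sorted_t => //= x t; rewrite rcons_path => ->.
Qed.

Lemma add_columnsP s : sorted geq s -> 0 < size s ->
  exists d t, s = add_columns d t /\ sorted geq t.
Proof.
case/lastP: s => // u d; rewrite !(sorted_pairwise geq_trans) pairwise_rcons.
case/andP=> /allP ge_u_d pw_u _; exists d, (map (subn^~ d) u); split.
  rewrite /add_columns map_rcons -map_comp addn0; congr rcons.
  by rewrite -[LHS]map_id; apply/eq_in_map => x /ge_u_d /= le_dx; rewrite subnKC.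
rewrite -(sorted_pairwise geq_trans) in pw_u.
by apply: homo_sorted pw_u => x y; apply: leq_sub2r.
Qed.

(* Block [i] lists the [add_columns d t] with [O t = i] and
   [d * uphalf L = n - i], so that the size recursion is a convolution. *)
Fixpoint padded_partitions (L n : nat) : seq (seq nat) :=
  if L is L'.+1 then
    flatten [seq [seq add_columns ((n - i) %/ uphalf L) t | t <- padded_partitions L' i]
            | i <- iota 0 n.+1 & uphalf L %| n - i]
  else if n == 0 then [:: [::]] else [::].

Lemma padded_partitionsS L n : padded_partitions L.+1 n =
  flatten [seq [seq add_columns ((n - i) %/ uphalf L.+1) t | t <- padded_partitions L i]
          | i <- iota 0 n.+1 & uphalf L.+1 %| n - i].
Proof. by []. Qed.

Lemma mem_padded_partitions L n s :
  (s \in padded_partitions L n) = [&& size s == L, sorted geq s & Oodd s == n].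
Proof.
rewrite Oodd_sum_every_other; elim: L n s => [|L IHL] n s.
  by case: s => [|x s] /=; case: eqVneq => //= ->; rewrite eq_sym.
rewrite padded_partitionsS.
apply/flattenP/and3P => [[_ /mapP [i i_in ->] /mapP [t t_in ->]] | ].
  move: i_in t_in; rewrite mem_filter mem_iota ltnS IHL.
  move=> /andP [dvd_i lei] /and3P [/eqP size_t sorted_t /eqP Oodd_t].
  rewrite size_map size_rcons size_t sorted_add_columns // sum_every_other_add_columns.
  by rewrite Oodd_t size_t divnK // subnKC.
case=> /eqP size_s sorted_s /eqP Oodd_s.
have [|d [t [eq_s sorted_t]]] := add_columnsP sorted_s; first by rewrite size_s.
have size_t : size t = L by move: size_s; rewrite eq_s size_map size_rcons => -[].
pose i := sum_every_other true t.
have n_eq : n = i + d * uphalf L.+1 by rewrite -Oodd_s eq_s sum_every_other_add_columns size_t.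
exists [seq add_columns ((n - i) %/ uphalf L.+1) t | t <- padded_partitions L i].
  apply/mapP; exists i => //; rewrite mem_filter mem_iota n_eq addKn dvdn_mull //=; lia.
apply/mapP; exists t; first by rewrite IHL size_t sorted_t /i !eqxx.
by rewrite eq_s n_eq addKn mulnK.
Qed.

Lemma uniq_padded_partitions L n : uniq (padded_partitions L n).
Proof.
elim: L n => [|L IHL] n; first by rewrite /=; case: (n == 0).
rewrite padded_partitionsS; apply: uniq_flatten_map.
- by rewrite filter_uniq ?iota_uniq.
- by move=> i; rewrite map_inj_uniq ?IHL // => t t' /add_columns_inj [].
move=> i j _ /mapP [t t_in ->] /mapP [t' t'_in /add_columns_inj [_ eq_t]].
move: t_in t'_in; rewrite eq_t !mem_padded_partitions.
by move=> /and3P [_ _ /eqP <-] /and3P [_ _ /eqP <-].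
Qed.

Lemma size_padded_partitions L n :
  Posz (size (padded_partitions L n)) = fprod (fun k => geom_series (uphalf k.+1)) L n.
Proof.
elim: L n => [|L IHL] n; first by case: n.
rewrite padded_partitionsS fprodS size_flatten /shape -map_comp sumnE big_map big_filter.
rewrite /fmul -(big_mkord xpredT (fun i => (_ i * _ (n - i)%N)%R)) big_mkcond -natz natr_sum.
apply: eq_bigr => i _; rewrite /= size_map -IHL /geom_series natz.
by case: dvdn; rewrite ?mulr1 ?mulr0.
Qed.

Definition strip_zeros (s : seq nat) : seq nat := [seq x <- s | 0 < x].

Lemma sorted_geq_strip_zeros s :
  sorted geq s -> s = strip_zeros s ++ nseq (size s - size (strip_zeros s)) 0.
Proof.
elim: s => [|x s IHs] //= path_s; have /IHs {1}-> := path_sorted path_s.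
case: posnP => [x0 | x_gt0]; last by rewrite subSS.
move: path_s; rewrite x0 (path_sortedE geq_trans) => /andP [s_le0 _].
have /all_pred1P -> : all (pred1 0) s by apply: sub_all s_le0 => y; rewrite /= leqn0.
by rewrite /strip_zeros filter_nseq /= !subn0 size_nseq.
Qed.

Lemma sorted_geq_cat_zeros s m : sorted geq s -> sorted geq (s ++ nseq m 0).
Proof.
rewrite !(sorted_pairwise geq_trans) pairwise_cat => -> /=.
apply/andP; split; first by apply/allrelP => x y _ /nseqP [-> _].
by elim: m => //= m ->; rewrite all_nseq orbT.
Qed.

Lemma partitions_Oodd_enum n : exists s : seq (seq nat),
  [/\ uniq s, forall pi, (pi \in s) = is_partition pi && (Oodd pi == n)
    & Posz (size s) = fprod (fun k => geom_series (uphalf k.+1)) n.*2 n].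
Proof.
exists (map strip_zeros (padded_partitions n.*2 n)); split.
- rewrite map_inj_in_uniq ?uniq_padded_partitions // => s s'.
  rewrite !mem_padded_partitions => /and3P [/eqP size_s sorted_s _].
  move=> /and3P [/eqP size_s' sorted_s' _] eq_strip.
  by rewrite (sorted_geq_strip_zeros sorted_s) (sorted_geq_strip_zeros sorted_s') eq_strip size_s size_s'.
- move=> pi; apply/mapP/andP => [[s] | [/andP [sorted_pi pos_pi] /eqP Oodd_pi]].
    rewrite mem_padded_partitions => /and3P [_ sorted_s /eqP Oodd_s] ->.
    rewrite /is_partition (sorted_filter geq_trans) // filter_all -Oodd_s.
    by rewrite {2}(sorted_geq_strip_zeros sorted_s) !Oodd_sum_every_other sum_every_other_cat_nseq0.
  have size_pi : size pi <= n.*2.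
    by rewrite -Oodd_pi Oodd_sum_every_other -[X in _ <= X]addn0 size_le_sum_every_other.
  exists (pi ++ nseq (n.*2 - size pi) 0); last first.
    by rewrite /strip_zeros filter_cat (all_filterP pos_pi) filter_nseq cats0.
  rewrite mem_padded_partitions size_cat size_nseq subnKC // eqxx sorted_geq_cat_zeros //=.
  by rewrite !Oodd_sum_every_other sum_every_other_cat_nseq0 -Oodd_sum_every_other Oodd_pi.
- by rewrite size_map size_padded_partitions.
Qed.

Lemma gtn_trans : transitive gtn.
Proof. exact: rev_trans ltn_trans. Qed.

Fixpoint distinct_parts_upto (w : nat -> nat) (N n : nat) : seq (seq nat) :=
  if N is N'.+1 then
    distinct_parts_upto w N' n ++
    (if w N <= n then map (cons N) (distinct_parts_upto w N' (n - w N)) else [::])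
  else if n == 0 then [:: [::]] else [::].

Lemma distinct_parts_uptoS w N n : distinct_parts_upto w N.+1 n =
  distinct_parts_upto w N n ++
  (if w N.+1 <= n then map (cons N.+1) (distinct_parts_upto w N (n - w N.+1)) else [::]).
Proof. by []. Qed.

Lemma mem_map_cons (T : eqType) (a : T) (L : seq (seq T)) s :
  (s \in map (cons a) L) = if s is x :: r then (x == a) && (r \in L) else false.
Proof.
case: s => [|x r]; first by apply/mapP => -[].
by apply/mapP/andP => [[t t_in [-> ->]] | [/eqP -> r_in]]; last exists r.
Qed.

Lemma mem_distinct_parts_upto w N n s : (s \in distinct_parts_upto w N n) =
  [&& path gtn N.+1 s, all (fun x => 0 < x) s & \sum_(x <- s) w x == n].
Proof.
elim: N n s => [|N IHN] n s.
  by case: s => [|[|x] s]; rewrite /= ?big_nil ?andbF //; case: n.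
rewrite distinct_parts_uptoS mem_cat IHN.
have mem_if b (L : seq (seq nat)) : (s \in (if b then L else [::])) = b && (s \in L).
  by case: b.
rewrite mem_if mem_map_cons {mem_if}; case: s => [|x s]; first by rewrite !andbF orbF.
rewrite IHN /= big_cons; have [ltxN | ltNx | ->] := ltngtP x N.+1.
- by rewrite ltnS (ltnW ltxN) /= andbF orbF.
- by rewrite (ltnNge x) ltNx /= andbF.
- rewrite ltnSn /=; case: path; case: all => //=; lia.
Qed.

Lemma uniq_distinct_parts_upto w N n : uniq (distinct_parts_upto w N n).
Proof.
elim: N n => [|N IHN] n; first by rewrite /=; case: (n == 0).
rewrite distinct_parts_uptoS cat_uniq IHN; case: leqP => //= _.
rewrite map_inj_uniq ?IHN ?andbT => [|t t' [] //].
by apply/hasPn => _ /mapP [t _ ->]; rewrite mem_distinct_parts_upto /= ltnn.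
Qed.

Lemma size_distinct_parts_upto w N n :
  Posz (size (distinct_parts_upto w N n)) = fprod (fun k => binom_factor 1 (w k.+1)) N n.
Proof.
elim: N n => [|N IHN] n; first by case: n.
rewrite distinct_parts_uptoS fprodS fmul_binom_factor size_cat PoszD IHN.
by case: leqP => _; rewrite ?size_map ?IHN ?mul1r ?addr0.
Qed.

Lemma sum_even_ltn x L : \sum_(i < L | ~~ odd i) (i < x) = uphalf (minn x L).
Proof.
elim: L => [|L IHL]; first by rewrite big_ord0 minn0.
rewrite [LHS]big_mkcond big_ord_recr /= -big_mkcond IHL.
case: leqP => [lexL | ltLx].
  by rewrite (minn_idPl (leqW lexL)); case: odd; rewrite addn0.
by rewrite (minn_idPr ltLx) uphalf_half; case: odd; rewrite /= ?addn0 ?addn1.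
Qed.

Lemma sorted_geq_le_head s x : sorted geq s -> x \in s -> x <= head 0 s.
Proof.
case: s => [|y s] //= path_s; rewrite inE => /predU1P [-> // | x_in_s].
by move: path_s; rewrite (path_sortedE geq_trans) => /andP [/allP /(_ x x_in_s)].
Qed.

Lemma Oodd_conj_part pi : sorted geq pi -> Oodd (conj_part pi) = \sum_(x <- pi) uphalf x.
Proof.
move=> sorted_pi; rewrite /Oodd /conj_part size_mkseq.
rewrite (eq_bigr (fun i : 'I__ => \sum_(x <- pi) (i < x))); last first.
  by move=> i _; rewrite nth_mkseq // -sum1_count big_mkcond.
rewrite exchange_big; apply: eq_big_seq => x x_in_pi.
by rewrite sum_even_ltn (minn_idPl (sorted_geq_le_head sorted_pi x_in_pi)).
Qed.

Lemma leq_sum_mem (f : nat -> nat) s x : x \in s -> f x <= \sum_(y <- s) f y.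
Proof.
elim: s => [|y s IHs] //; rewrite inE big_cons => /predU1P [-> | /IHs]; first exact: leq_addr.
by move/leq_trans; apply; apply: leq_addl.
Qed.

Lemma distinct_parts_Oodd_conj_enum n : exists s : seq (seq nat),
  [/\ uniq s, forall pi, (pi \in s) = distinct_parts pi && (Oodd (conj_part pi) == n)
    & Posz (size s) = fprod (fun k => binom_factor 1 (uphalf k.+1)) n.*2 n].
Proof.
exists (distinct_parts_upto uphalf n.*2 n); split.
- exact: uniq_distinct_parts_upto.
- move=> pi; have sorted_geq_pi : sorted gtn pi -> sorted geq pi.
    by rewrite gtn_sorted_uniq_geq => /andP [].
  rewrite mem_distinct_parts_upto (path_sortedE gtn_trans).
  have -> : distinct_parts pi = sorted gtn pi && all (fun x => 0 < x) pi.
    by rewrite /distinct_parts /is_partition gtn_sorted_uniq_geq; case: uniq; case: sorted; case: all.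
  apply/and3P/andP => [[/andP [_ sorted_pi] pos_pi /eqP sum_pi] | [/andP [sorted_pi pos_pi]]].
    by rewrite sorted_pi pos_pi Oodd_conj_part ?sum_pi ?sorted_geq_pi.
  rewrite Oodd_conj_part ?sorted_geq_pi // => /eqP sum_pi; split=> //; last by rewrite sum_pi.
  rewrite sorted_pi andbT; apply/allP => x x_in_pi.
  by rewrite /= ltnS -leq_uphalf_double -sum_pi leq_sum_mem.
- by rewrite size_distinct_parts_upto.
Qed.

Lemma fprod_geom_series_qq_inv n :
  fmul (fprod (fun k => geom_series (uphalf k.+1)) n.*2)
       (fmul (fprod qq_factor n) (fprod qq_factor n)) = fps1.
Proof.
rewrite -(fprod_double qq_factor) -fprodM -[RHS](fprod_fps1 n.*2); congr fprod.
by apply: functional_extensionality => k; apply: fmul_geom_series_binom.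
Qed.

Local Open Scope ring_scope.

Theorem theorem12 :
  (* first identity: sum_{pi in U} q^{O(pi)} = 1/(q;q)_oo^2 *)
  ((exists P, is_infprod qq_factor P) /\
   forall P, is_infprod qq_factor P ->
   exists G : fps,
     (forall n, fmul G (fmul P P) n = fps1 n) /\
     forall n, exists s : seq (seq nat),
       [/\ uniq s,
           forall pi, (pi \in s) = is_partition pi && (Oodd pi == n)
         & (size s)%:Z = G n])
  /\
  (* second identity: sum_{pi in D} q^{O(pi')} = (-q;q)_oo^2 *)
  ((exists P, is_infprod mqq_factor P) /\
   forall P, is_infprod mqq_factor P ->
     forall n, exists s : seq (seq nat),
       [/\ uniq s,
           forall pi, (pi \in s) = distinct_parts pi && (Oodd (conj_part pi) == n)
         & (size s)%:Z = fmul P P n]).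
Proof.
have qq_lt j i : (i <= j)%N -> qq_factor j i = fps1 i by apply: (@binom_factor_lt _ j.+1).
have mqq_lt j i : (i <= j)%N -> mqq_factor j i = fps1 i by apply: (@binom_factor_lt _ j.+1).
split; split; first by eexists; apply: is_infprod_fprod qq_lt.
- move=> P infP; exists (fun n => fprod (fun k => geom_series (uphalf k.+1)) n.*2 n).
  split=> [n | n]; last exact: partitions_Oodd_enum.
  rewrite -(fprod_geom_series_qq_inv n); apply: fmul_eq_upto => k lekn.
    symmetry; apply: fprod_stable; rewrite ?leq_double // => j i le2kj leik.
    by rewrite geom_series_lt // ltnS (leq_trans leik) // geq_half_double.
  exact: is_infprod_fmul_coef qq_lt P n k infP lekn.
- by eexists; apply: is_infprod_fprod mqq_lt.
move=> P infP n; have [s [uniq_s mem_s size_s]] := distinct_parts_Oodd_conj_enum n.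
exists s; split=> //; rewrite size_s (is_infprod_fmul_coef mqq_lt infP (leqnn n)).
by rewrite -(fprod_double mqq_factor).
Qed.
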